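(* For real $x>0$ let \[ S(x)=\int_0^\infty\frac{2\arctan(t/x)}{e^{2\pi t}-1}\,dt. \] Let $p\in(1,\infty)\setminus\{2\}$ and $\frac1p+\frac1{p'}=1$. Then for every $k\in\mathbb N$, \[ S(k)-\frac1pS(kp/2)-\frac1{p'}S(kp'/2)<0, \] and $\lim_{k\to\infty}\left(S(k)-\frac1pS(kp/2)-\frac1{p'}S(kp'/2)\right)=0$. *)

From Stdlib Require Import Reals.
From Coquelicot Require Import Coquelicot.
Open Scope R_scope.

Definition S_integrand (x t : R) : R := 2 * atan (t / x) / (exp (2 * PI * t) - 1).

Definition S (x : R) : R :=
  RInt_gen (S_integrand x) (at_point 0) (Rbar_locally p_infty).

Definition Sdiff (p p' k : R) : R :=
  S k - (1 / p) * S (k * p / 2) - (1 / p') * S (k * p' / 2).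

From Stdlib Require Import Reals Lra Lia.
From Coquelicot Require Import Coquelicot.
Open Scope R_scope.

(* With E(t) = e^{2 pi t} - 1 and psi_t(u) = u atan(t u), the integrand of
   S(k) - S(kp/2)/p - S(kp'/2)/p' is (k / E(t)) (2 psi_t(1/k) - psi_t(2/(kp)) - psi_t(2/(kp'))).
   As 1/k is the midpoint of 2/(kp) and 2/(kp'), which differ because p <> 2, strict
   convexity of psi_t (psi_t'' = 2t / (1 + t^2 u^2)^2 > 0) makes it negative for every t > 0.
   The bounds atan y <= y and e^y - 1 >= y + y^3/27 dominate the integrand of S(x) by
   (2/x) / (1 + t^2), so S(x) exists and 0 <= S(x) <= pi/x; this squeezes the difference
   between -2 pi/k and 0. *)

Lemma is_RInt_gen_le_p_infty (f : R -> R) (a L M : R) :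
  is_RInt_gen f (at_point a) (Rbar_locally p_infty) L ->
  Rbar_locally p_infty (fun b => RInt f a b <= M) -> L <= M.
Proof.
  intros HL [b0 Hb0].
  apply Rnot_lt_le; intros HML.
  destruct (proj1 (filterlimi_locally _ L) HL (mkposreal _ (proj2 (Rlt_0_minus _ _) HML)))
    as [Pa Pb HPa [b1 HPb] Hab].
  set (b := Rmax b0 b1 + 1).
  assert (Hb : b0 < b /\ b1 < b) by (pose proof Rmax_l b0 b1; pose proof Rmax_r b0 b1; unfold b; lra).
  destruct (Hab a b HPa (HPb b (proj2 Hb))) as [z [Hz Hball]].
  change (Rabs (z - L) < L - M) in Hball.
  assert (z <= M).
  { rewrite <- (is_RInt_unique _ _ _ _ Hz). apply Hb0, Hb. }
  apply Rabs_def2 in Hball. lra.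
Qed.

Lemma RInt_le_RInt_upper (f : R -> R) (a b c : R) :
  a <= b <= c -> ex_RInt f a c -> (forall t, b < t < c -> 0 <= f t) ->
  RInt f a b <= RInt f a c.
Proof.
  intros Habc Hex Hpos.
  assert (Hab : ex_RInt f a b) by (apply (ex_RInt_Chasles_1 f a b c); auto).
  assert (Hbc : ex_RInt f b c) by (apply (ex_RInt_Chasles_2 f a b c); auto).
  rewrite <- (RInt_Chasles f a b c Hab Hbc).
  change (plus _ _) with (RInt f a b + RInt f b c).
  assert (0 <= RInt f b c) by (apply RInt_ge_0; [lra|auto|intros; apply Hpos; lra]).
  lra.
Qed.

Lemma is_RInt_gen_nonneg_bounded (f : R -> R) (a M : R) :
  (forall b, a <= b -> ex_RInt f a b) ->
  (forall t, a < t -> 0 <= f t) ->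
  (forall b, a <= b -> RInt f a b <= M) ->
  exists L, is_RInt_gen f (at_point a) (Rbar_locally p_infty) L /\ 0 <= L <= M.
Proof.
  intros Hex Hpos HM.
  set (E := fun y => exists b, a <= b /\ y = RInt f a b).
  destruct (completeness E) as [L [HLub HLleast]].
  { exists M. intros y [b [Hb ->]]. auto. }
  { exists (RInt f a a), a. split; [lra|reflexivity]. }
  exists L. split; [|split].
  - apply filterlimi_locally. intros eps.
    assert (Happrox : exists b0, a <= b0 /\ L - eps < RInt f a b0).
    { apply Classical_Pred_Type.not_all_not_ex. intros Hno.
      assert (L <= L - eps).
      { apply HLleast. intros y [b [Hb ->]].
        apply Rnot_lt_le. intros Hlt. apply (Hno b). split; auto. }
      pose proof (cond_pos eps). lra. }
    destruct Happrox as [b0 [Hb0 Hlt]].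
    apply (Filter_prod _ _ _ (fun x => x = a) (fun b => b0 < b)); [reflexivity|exists b0; auto|].
    intros x b -> Hb. exists (RInt f a b). split.
    + apply (RInt_correct f a b), Hex. lra.
    + assert (RInt f a b0 <= RInt f a b)
        by (apply RInt_le_RInt_upper; [lra|apply Hex; lra|intros; apply Hpos; lra]).
      assert (RInt f a b <= L) by (apply HLub; exists b; split; auto; lra).
      change (Rabs (RInt f a b - L) < eps). apply Rabs_def1; lra.
  - apply Rle_trans with (RInt f a a); [rewrite RInt_point; apply Rle_refl|].
    apply HLub. exists a. split; [lra|reflexivity].
  - apply HLleast. intros y [b [Hb ->]]. auto.
Qed.

Lemma exp_sub1_ge_cubic y : 0 <= y -> y + y ^ 3 / 27 <= exp y - 1.
Proof.
  intros Hy.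
  assert (Hcube : exp y = exp (y / 3) * exp (y / 3) * exp (y / 3)).
  { rewrite <- !exp_plus. f_equal. field. }
  pose proof (exp_ineq1_le (y / 3)).
  assert ((1 + y / 3) * (1 + y / 3) <= exp (y / 3) * exp (y / 3))
    by (apply Rmult_le_compat; lra).
  assert ((1 + y / 3) * (1 + y / 3) * (1 + y / 3) <= exp y)
    by (rewrite Hcube; apply Rmult_le_compat; nra).
  nra.
Qed.

Lemma atan_le_id s : 0 <= s -> atan s <= s.
Proof.
  intros Hs. destruct (Req_dec s 0) as [->|Hs0]; [rewrite atan_0; lra|].
  destruct (MVT_cor2 (fun u => u - atan u) (fun u => 1 - / (1 + u ^ 2)) 0 s)
    as [c [Hc _]]; [lra| |].
  - intros c _. apply derivable_pt_lim_minus.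
    + apply derivable_pt_lim_id.
    + apply derivable_pt_lim_atan.
  - rewrite atan_0 in Hc.
    assert (/ (1 + c ^ 2) <= 1) by (rewrite <- Rinv_1; apply Rinv_le_contravar; nra).
    nra.
Qed.

Lemma atan_nonneg s : 0 <= s -> 0 <= atan s.
Proof.
  intros Hs. destruct (Req_dec s 0) as [->|Hs0]; [rewrite atan_0; lra|].
  rewrite <- atan_0. left. apply atan_increasing. lra.
Qed.

Lemma is_RInt_atan_derive b : is_RInt (fun t => / (1 + t ^ 2)) 0 b (atan b).
Proof.
  replace (atan b) with (atan b - atan 0) by (rewrite atan_0; ring).
  apply (is_RInt_derive atan).
  - intros t _. apply is_derive_Reals, derivable_pt_lim_atan.
  - intros t _. apply continuous_Rinv_comp; [|nra].
    apply (ex_derive_continuous (fun u => 1 + u ^ 2)). auto_derive. auto.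
Qed.

Lemma exp_2PI_sub1_pos t : 0 < t -> 0 < exp (2 * PI * t) - 1.
Proof.
  intros Ht. pose proof PI_RGT_0.
  pose proof (exp_ineq1 (2 * PI * t) ltac:(nra)). nra.
Qed.

Lemma S_integrand_le x t :
  0 < x -> 0 < t -> 0 <= S_integrand x t <= 2 / x * / (1 + t ^ 2).
Proof.
  intros Hx Ht. unfold S_integrand. pose proof PI2_3_2.
  assert (Htx : 0 <= t / x) by (apply Rlt_le, Rdiv_lt_0_compat; auto).
  pose proof (atan_le_id _ Htx). pose proof (atan_nonneg _ Htx).
  pose proof (exp_sub1_ge_cubic (2 * PI * t) ltac:(nra)).
  set (E := exp (2 * PI * t) - 1) in *.
  assert (HE : t * (1 + t ^ 2) <= E).
  { assert (H27 : 27 <= PI ^ 3) by (simpl; nra).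
    assert (0 <= t ^ 3) by (apply pow_le; lra).
    replace ((2 * PI * t) ^ 3 / 27) with (t ^ 3 * 8 * PI ^ 3 / 27) in * by field.
    nra. }
  assert (HE0 : 0 < E) by nra.
  split.
  - apply Rmult_le_pos; [lra|]. apply Rlt_le, Rinv_0_lt_compat; auto.
  - apply Rle_trans with (2 / x * (t / E)).
    + replace (2 / x * (t / E)) with (2 * (t / x) / E) by (field; lra).
      apply Rmult_le_compat_r; [apply Rlt_le, Rinv_0_lt_compat|]; lra.
    + apply Rmult_le_compat_l; [apply Rlt_le, Rdiv_lt_0_compat; lra|].
      apply (Rmult_le_reg_r (E * (1 + t ^ 2))); [nra|].
      replace (t / E * (E * (1 + t ^ 2))) with (t * (1 + t ^ 2)) by (field; lra).
      replace (/ (1 + t ^ 2) * (E * (1 + t ^ 2))) with E by (field; nra). lra.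
Qed.

Definition slope0 (h : R -> R) (l t : R) : R :=
  if Req_EM_T t 0 then l else h t / t.

Lemma continuous_slope0_at0 h l :
  h 0 = 0 -> derivable_pt_lim h 0 l -> continuous (slope0 h l) 0.
Proof.
  intros Hh0 Hd. apply continuity_pt_filterlim.
  intros eps Heps. destruct (Hd eps Heps) as [del Hdel].
  exists del. split; [apply cond_pos|].
  intros t [_ Ht]. unfold dist in *; simpl in *; unfold R_dist in *.
  unfold slope0. destruct (Req_EM_T 0 0) as [_|]; [|congruence].
  destruct (Req_EM_T t 0) as [->|Ht0].
  - rewrite Rminus_diag, Rabs_R0; auto.
  - rewrite Rminus_0_r in Ht. specialize (Hdel t Ht0 Ht).
    rewrite Rplus_0_l, Hh0, Rminus_0_r in Hdel. exact Hdel.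
Qed.

Lemma continuous_slope0 h l t : t <> 0 -> continuous h t -> continuous (slope0 h l) t.
Proof.
  intros Ht Hc.
  apply (continuous_ext_loc _ (fun s => h s * / s)).
  - exists (mkposreal _ (Rabs_pos_lt t Ht)). intros s Hs.
    unfold slope0. destruct (Req_EM_T s 0) as [->|]; [|reflexivity].
    change (Rabs (0 - t) < Rabs t) in Hs.
    rewrite Rminus_0_l, Rabs_Ropp in Hs. lra.
  - apply (continuous_mult h (fun s => / s)); auto. apply continuous_Rinv; auto.
Qed.

(* Away from [0], [S_integrand x t = 2 (atan (t/x) / t) / ((e^{2 pi t} - 1) / t)];
   both quotients extend continuously to [0]. *)
Definition S_integrand_ext (x t : R) : R :=
  2 * slope0 (fun s => atan (s / x)) (/ x) t / slope0 (fun s => exp (2 * PI * s) - 1) (2 * PI) t.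

Lemma S_integrand_ext_eq x t : 0 < t -> S_integrand_ext x t = S_integrand x t.
Proof.
  intros Ht. unfold S_integrand_ext, S_integrand, slope0.
  destruct (Req_EM_T t 0); [lra|].
  pose proof (exp_2PI_sub1_pos t Ht). field. lra.
Qed.

Lemma continuous_S_integrand_ext x t : 0 < x -> continuous (S_integrand_ext x) t.
Proof.
  intros Hx. pose proof PI_RGT_0.
  assert (Hden : slope0 (fun s => exp (2 * PI * s) - 1) (2 * PI) t <> 0).
  { unfold slope0. destruct (Req_EM_T t 0) as [|Ht]; [lra|].
    apply Rmult_integral_contrapositive; split; [|apply Rinv_neq_0_compat; auto].
    intros He. apply Ht, (Rmult_eq_reg_l (2 * PI)); [|lra].
    rewrite Rmult_0_r. apply exp_inv. rewrite exp_0. lra. }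
  apply (continuous_mult (fun t => 2 * slope0 (fun s => atan (s / x)) (/ x) t)).
  - apply (continuous_mult (fun _ => 2)); [apply continuous_const|].
    destruct (Req_dec t 0) as [->|Ht].
    + apply continuous_slope0_at0; [rewrite Rdiv_0_l, atan_0; auto|].
      apply is_derive_Reals. auto_derive; auto. field. lra.
    + apply continuous_slope0; auto.
      apply (ex_derive_continuous (fun s => atan (s / x))). auto_derive. auto.
  - apply continuous_Rinv_comp; auto.
    destruct (Req_dec t 0) as [->|Ht].
    + apply continuous_slope0_at0; [rewrite Rmult_0_r, exp_0; ring|].
      apply is_derive_Reals. auto_derive; auto. rewrite Rmult_0_r, exp_0; ring.
    + apply continuous_slope0; auto.
      apply (ex_derive_continuous (fun s => exp (2 * PI * s) - 1)). auto_derive. auto.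
Qed.

Lemma ex_RInt_S_integrand x a b : 0 < x -> 0 <= a -> 0 <= b -> ex_RInt (S_integrand x) a b.
Proof.
  intros Hx Ha Hb. apply (ex_RInt_ext (S_integrand_ext x)).
  - intros t [Ht _]. apply S_integrand_ext_eq.
    apply Rle_lt_trans with (Rmin a b); auto. apply Rmin_glb; auto.
  - apply (ex_RInt_continuous (V := R_CompleteNormedModule)).
    intros t _. apply continuous_S_integrand_ext; auto.
Qed.

Lemma is_RInt_gen_S x :
  0 < x -> is_RInt_gen (S_integrand x) (at_point 0) (Rbar_locally p_infty) (S x) /\
           0 <= S x <= PI / x.
Proof.
  intros Hx.
  destruct (is_RInt_gen_nonneg_bounded (S_integrand x) 0 (PI / x)) as [L [HL HLb]].
  - intros b Hb. apply ex_RInt_S_integrand; lra.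
  - intros t Ht. apply S_integrand_le; auto.
  - intros b Hb.
    apply Rle_trans with (2 / x * atan b).
    + assert (Hdom : is_RInt (fun t => 2 / x * / (1 + t ^ 2)) 0 b (2 / x * atan b))
        by apply (is_RInt_scal _ 0 b (2 / x) _ (is_RInt_atan_derive b)).
      rewrite <- (is_RInt_unique _ _ _ _ Hdom).
      apply RInt_le; [auto|apply ex_RInt_S_integrand; lra|eexists; apply Hdom|].
      intros t Ht. apply S_integrand_le; lra.
    + pose proof (atan_bound b).
      replace (PI / x) with (2 / x * (PI / 2)) by (field; lra).
      apply Rmult_le_compat_l; [apply Rlt_le, Rdiv_lt_0_compat|]; lra.
  - replace (S x) with L; [auto|]. symmetry. apply is_RInt_gen_unique, HL.
Qed.

Lemma strict_increasing_of_pos_derive f f' :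
  (forall c, derivable_pt_lim f c (f' c)) -> (forall c, 0 < f' c) ->
  forall a b, a < b -> f a < f b.
Proof.
  intros Hd Hpos a b Hab.
  destruct (MVT_cor2 f f' a b Hab) as [c [Hc _]]; [intros; apply Hd|].
  pose proof (Hpos c). nra.
Qed.

Lemma midpoint_strict_convex f f' u1 u2 :
  (forall c, derivable_pt_lim f c (f' c)) -> (forall a b, a < b -> f' a < f' b) ->
  u1 <> u2 -> 2 * f ((u1 + u2) / 2) < f u1 + f u2.
Proof.
  intros Hd Hincr.
  assert (Hlt : forall a b, a < b -> 2 * f ((a + b) / 2) < f a + f b).
  { intros a b Hab. set (m := (a + b) / 2).
    destruct (MVT_cor2 f f' a m) as [c1 [E1 H1]]; [unfold m; lra|intros; apply Hd|].
    destruct (MVT_cor2 f f' m b) as [c2 [E2 H2]]; [unfold m; lra|intros; apply Hd|].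
    assert (f' c1 < f' c2) by (apply Hincr; lra).
    assert (m - a = b - m) by (unfold m; field).
    assert (0 < m - a) by (unfold m; lra).
    nra. }
  intros Hne. destruct (Rtotal_order u1 u2) as [|[|]]; [auto|congruence|].
  replace ((u1 + u2) / 2) with ((u2 + u1) / 2) by field.
  rewrite (Rplus_comm (f u1)). apply Hlt. lra.
Qed.

Lemma u_atan_midpoint_strict_convex t u1 u2 :
  0 < t -> u1 <> u2 ->
  2 * ((u1 + u2) / 2 * atan (t * ((u1 + u2) / 2))) < u1 * atan (t * u1) + u2 * atan (t * u2).
Proof.
  intros Ht.
  apply (midpoint_strict_convex (fun u => u * atan (t * u))
           (fun u => atan (t * u) + u * t / (1 + (t * u) ^ 2))).
  - intros u. apply is_derive_Reals. auto_derive; auto. field. nra.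
  - apply (strict_increasing_of_pos_derive _ (fun u => 2 * t / (1 + (t * u) ^ 2) ^ 2)).
    + intros u. apply is_derive_Reals. auto_derive; [nra|]. field. nra.
    + intros u. apply Rdiv_lt_0_compat; [lra|]. apply pow_lt. nra.
Qed.

Definition Sdiff_integrand (p p' x t : R) : R :=
  S_integrand x t - (1 / p) * S_integrand (x * p / 2) t - (1 / p') * S_integrand (x * p' / 2) t.

Lemma Sdiff_integrand_neg p p' x t :
  0 < p -> 0 < p' -> p <> p' -> 1 / p + 1 / p' = 1 -> 0 < x -> 0 < t ->
  Sdiff_integrand p p' x t < 0.
Proof.
  intros Hp Hp' Hpp' Hconj Hx Ht.
  pose proof (exp_2PI_sub1_pos t Ht) as HE.
  set (E := exp (2 * PI * t) - 1) in HE.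
  set (u1 := 2 / (x * p)). set (u2 := 2 / (x * p')).
  assert (Hmid : (u1 + u2) / 2 = / x).
  { unfold u1, u2. rewrite <- (Rmult_1_r (/ x)), <- Hconj. field. lra. }
  assert (Hu : u1 <> u2).
  { intros Heq. apply Hpp'.
    replace p with (2 / x / u1) by (unfold u1; field; lra).
    replace p' with (2 / x / u2) by (unfold u2; field; lra).
    now rewrite Heq. }
  assert (Hid : Sdiff_integrand p p' x t =
    x / E * (2 * ((u1 + u2) / 2 * atan (t * ((u1 + u2) / 2)))
             - (u1 * atan (t * u1) + u2 * atan (t * u2)))).
  { rewrite Hmid. unfold Sdiff_integrand, S_integrand. fold E.
    replace (t / (x * p / 2)) with (t * u1) by (unfold u1; field; lra).
    replace (t / (x * p' / 2)) with (t * u2) by (unfold u2; field; lra).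
    change (t / x) with (t * / x).
    set (a0 := atan (t * / x)). set (a1 := atan (t * u1)). set (a2 := atan (t * u2)).
    unfold u1, u2. field. lra. }
  rewrite Hid.
  pose proof (u_atan_midpoint_strict_convex t u1 u2 Ht Hu).
  assert (0 < x / E) by (apply Rdiv_lt_0_compat; lra).
  nra.
Qed.

Lemma is_RInt_gen_Sdiff p p' x :
  0 < p -> 0 < p' -> 0 < x ->
  is_RInt_gen (Sdiff_integrand p p' x) (at_point 0) (Rbar_locally p_infty) (Sdiff p p' x).
Proof.
  intros Hp Hp' Hx.
  destruct (is_RInt_gen_S x Hx) as [I1 _].
  destruct (is_RInt_gen_S (x * p / 2) ltac:(nra)) as [I2 _].
  destruct (is_RInt_gen_S (x * p' / 2) ltac:(nra)) as [I3 _].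
  exact (is_RInt_gen_minus _ _ _ _
           (is_RInt_gen_minus _ _ _ _ I1 (is_RInt_gen_scal _ (1 / p) _ I2))
           (is_RInt_gen_scal _ (1 / p') _ I3)).
Qed.

Lemma ex_RInt_Sdiff_integrand p p' x a b :
  0 < p -> 0 < p' -> 0 < x -> 0 <= a -> 0 <= b -> ex_RInt (Sdiff_integrand p p' x) a b.
Proof.
  intros Hp Hp' Hx Ha Hb.
  assert (Hxp : 0 < x * p / 2) by nra. assert (Hxp' : 0 < x * p' / 2) by nra.
  apply (ex_RInt_minus (V := R_NormedModule)); [apply (ex_RInt_minus (V := R_NormedModule))|].
  - apply ex_RInt_S_integrand; auto.
  - apply (ex_RInt_scal (V := R_NormedModule)), ex_RInt_S_integrand; auto.
  - apply (ex_RInt_scal (V := R_NormedModule)), ex_RInt_S_integrand; auto.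
Qed.

Lemma RInt_const_0 a b : RInt (fun _ => 0) a b = 0.
Proof. rewrite RInt_const. apply Rmult_0_r. Qed.

Lemma RInt_Sdiff_integrand_0_1_neg p p' x :
  0 < p -> 0 < p' -> p <> p' -> 1 / p + 1 / p' = 1 -> 0 < x ->
  RInt (Sdiff_integrand p p' x) 0 1 < 0.
Proof.
  intros Hp Hp' Hpp' Hconj Hx.
  assert (Hxp : 0 < x * p / 2) by nra. assert (Hxp' : 0 < x * p' / 2) by nra.
  set (G := fun t => S_integrand_ext x t - 1 / p * S_integrand_ext (x * p / 2) t
                     - 1 / p' * S_integrand_ext (x * p' / 2) t).
  replace (RInt (Sdiff_integrand p p' x) 0 1) with (RInt G 0 1).
  2:{ apply RInt_ext. intros t [Ht _]. rewrite Rmin_left in Ht by lra.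
      unfold G, Sdiff_integrand. rewrite !S_integrand_ext_eq; auto. }
  apply Rlt_le_trans with (RInt (fun _ => 0) 0 1); [|rewrite RInt_const_0; lra].
  apply RInt_lt; [lra|intros; apply continuous_const| |].
  - intros t _. unfold G.
    apply (continuous_minus (V := R_NormedModule)
             (fun t => S_integrand_ext x t - 1 / p * S_integrand_ext (x * p / 2) t));
      [apply (continuous_minus (V := R_NormedModule) (S_integrand_ext x))|];
      try apply (continuous_scal_r (V := R_NormedModule));
      apply continuous_S_integrand_ext; assumption.
  - intros t Ht. unfold G. rewrite !S_integrand_ext_eq by lra.
    apply Sdiff_integrand_neg; auto; lra.
Qed.

Lemma Sdiff_neg p p' x :
  0 < p -> 0 < p' -> p <> p' -> 1 / p + 1 / p' = 1 -> 0 < x -> Sdiff p p' x < 0.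
Proof.
  intros Hp Hp' Hpp' Hconj Hx.
  set (D := Sdiff_integrand p p' x).
  assert (Hex : forall a b, 0 <= a -> 0 <= b -> ex_RInt D a b)
    by (intros; apply ex_RInt_Sdiff_integrand; auto).
  apply Rle_lt_trans with (RInt D 0 1); [|apply RInt_Sdiff_integrand_0_1_neg; auto].
  apply (is_RInt_gen_le_p_infty D 0); [apply is_RInt_gen_Sdiff; auto|].
  exists 1. intros b Hb.
  rewrite <- (RInt_Chasles D 0 1 b) by (apply Hex; lra).
  assert (Htail : RInt D 1 b <= RInt (fun _ => 0) 1 b).
  { apply RInt_le; [lra|apply Hex; lra|apply ex_RInt_const|].
    intros t Ht. left. apply Sdiff_integrand_neg; auto; lra. }
  rewrite RInt_const_0 in Htail.
  change (plus _ _) with (RInt D 0 1 + RInt D 1 b). lra.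
Qed.

Lemma Sdiff_ge p p' x :
  0 < p -> 0 < p' -> 1 / p + 1 / p' = 1 -> 0 < x -> - (2 * PI / x) <= Sdiff p p' x.
Proof.
  intros Hp Hp' Hconj Hx.
  destruct (is_RInt_gen_S x Hx) as [_ B1].
  destruct (is_RInt_gen_S (x * p / 2) ltac:(nra)) as [_ B2].
  destruct (is_RInt_gen_S (x * p' / 2) ltac:(nra)) as [_ B3].
  set (q := 1 / p) in *. set (q' := 1 / p') in *.
  assert (0 < q) by (apply Rdiv_lt_0_compat; lra).
  assert (0 < q') by (apply Rdiv_lt_0_compat; lra).
  replace (PI / (x * p / 2)) with (2 * PI / x * q) in B2 by (unfold q; field; lra).
  replace (PI / (x * p' / 2)) with (2 * PI / x * q') in B3 by (unfold q'; field; lra).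
  assert (0 < 2 * PI / x) by (pose proof PI_RGT_0; apply Rdiv_lt_0_compat; lra).
  unfold Sdiff. fold q q'. nra.
Qed.

Lemma conjugate_exponent_pos p p' : 1 < p -> 1 / p + 1 / p' = 1 -> 0 < p'.
Proof.
  intros Hp Hconj.
  assert (1 / p < 1) by (apply (Rmult_lt_reg_r p); [lra|field_simplify; lra]).
  assert (Hq' : 0 < / p') by lra.
  rewrite <- (Rinv_inv p'). apply Rinv_0_lt_compat, Hq'.
Qed.

Lemma conjugate_exponent_ne p p' : p <> 2 -> 1 / p + 1 / p' = 1 -> p <> p'.
Proof.
  intros Hp2 Hconj <-. apply Hp2.
  assert (p <> 0) by (intros ->; unfold Rdiv in Hconj; rewrite Rinv_0 in Hconj; lra).
  replace 2 with (p * (1 / p + 1 / p)) by (field; auto).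
  rewrite Hconj. ring.
Qed.

Lemma is_lim_seq_opp_div_INR c : is_lim_seq (fun k : nat => - (c / INR k)) 0.
Proof.
  assert (H : is_lim_seq (fun k : nat => c * / INR k) (Rbar_mult c (Rbar_inv p_infty)))
    by (apply is_lim_seq_scal_l, is_lim_seq_inv; [apply is_lim_seq_INR|discriminate]).
  apply is_lim_seq_opp in H. simpl in H. rewrite Rmult_0_r, Ropp_0 in H. exact H.
Qed.

Theorem proposition3p1 (p p' : R) (hp : 1 < p) (hp2 : p <> 2)
  (hconj : 1 / p + 1 / p' = 1) :
  (forall k : nat, (1 <= k)%nat -> Sdiff p p' (INR k) < 0) /\
  is_lim_seq (fun k : nat => Sdiff p p' (INR k)) 0.
Proof.
  pose proof (conjugate_exponent_pos p p' hp hconj) as hp'.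
  pose proof (conjugate_exponent_ne p p' hp2 hconj) as hpp'.
  assert (Hk : forall k : nat, (1 <= k)%nat -> 0 < INR k) by (intros k H1k; apply lt_0_INR; lia).
  split.
  - intros k H1k. apply Sdiff_neg; auto; lra.
  - apply (is_lim_seq_le_le_loc (fun k => - (2 * PI / INR k)) _ (fun _ => 0)).
    + exists 1%nat. intros k H1k. split.
      * apply Sdiff_ge; auto; lra.
      * left. apply Sdiff_neg; auto; lra.
    + apply is_lim_seq_opp_div_INR.
    + apply is_lim_seq_const.
Qed.
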